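(* For every integer $m\ge0$, $$A_{2m+1}(0,-1)=(-1)^m\frac{E_{2m+1}}{2^m},\qquad A_{2m+2}(0,-1)=(-1)^m\frac{E_{2m+3}}{2^{m+1}}.$$
   Context: For a permutation $\pi=a_1\cdots a_n$ of $[n]$, an index $i\in[n-1]$ is a descent if $a_i>a_{i+1}$; $\mathrm{odes}(\pi)$ and $\mathrm{edes}(\pi)$ count descents at odd and even positions. $A_n(p,q)=\sum_{\pi\in\mathfrak S_n}p^{\mathrm{odes}(\pi)}q^{\mathrm{edes}(\pi)}$. $E_n$ is the Euler number, the number of alternating permutations $a_1>a_2<a_3>\cdots$ in $\mathfrak S_n$; $\sum_{n\ge0}E_nt^n/n!=\tan t+\sec t$. *)

From HB Require Import structures.
From mathcomp Require Import all_boot all_order all_algebra all_fingroup.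
Set Implicit Arguments. Unset Strict Implicit. Unset Printing Implicit Defensive.
Import GRing.Theory.

(* One-line notation of a permutation s of {0,..,n-1}: the word a_1 ... a_n,
   stored 0-based: a_(i+1) = nth 0 (pword s) i (values in 0..n-1). *)
Definition pword n (s : 'S_n) : seq nat := [seq val (s i) | i <- enum 'I_n].

(* i (1-based, 1 <= i <= n-1) is a descent iff a_i > a_(i+1). *)
Definition is_descent n (s : 'S_n) (i : nat) : bool :=
  nth 0 (pword s) i.-1 > nth 0 (pword s) i.

Definition odes n (s : 'S_n) : nat :=
  count (fun i => odd i && is_descent s i) (iota 1 n.-1).
Definition edes n (s : 'S_n) : nat :=
  count (fun i => ~~ odd i && is_descent s i) (iota 1 n.-1).

Definition Apq (R : comNzRingType) (n : nat) (p q : R) : R :=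
  \sum_(s : 'S_n) p ^+ odes s * q ^+ edes s.

Definition alternating n (s : 'S_n) : bool :=
  all (fun i => if odd i then is_descent s i else ~~ is_descent s i) (iota 1 n.-1).

Definition Euler (n : nat) : nat := #|[set s : 'S_n | alternating s]|.

From HB Require Import structures.
From mathcomp Require Import all_boot all_order all_algebra all_fingroup.
From mathcomp Require Import zify ring.
Set Implicit Arguments.
Unset Strict Implicit.
Unset Printing Implicit Defensive.
Import GRing.Theory Num.Theory.
Local Open Scope ring_scope.

(* Removing the last letter of a permutation of S_(n+1) gives, for arbitrary
   position-dependent weights of ascents and descents, a binomial recurrence for the
   total weight of S_(n+1) in terms of those of S_1, ..., S_n (weight_sumS).
   For the weights of A_n(0,-1) it expresses A_(2m+1)(0,-1) and A_(2m+2)(0,-1) through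
   the values A_(2i+2)(0,-1), i < m.  For the weights selecting alternating permutations
   it gives sum_i C(2m+1,2i+1) (-1)^i E_(2i+1) = 1, i.e. tanh * cosh = sinh for the
   series with coefficients (-1)^i E_(2i+1).  Differentiating, tanh = tanh' sinh cosh
   and tanh' (1 + sinh^2) = 1; on Taylor coefficients these are the same recurrences,
   satisfied by (-1)^m E_(2m+1) and (-1)^m E_(2m+3) instead of 2^m A_(2m+1)(0,-1) and
   2^(m+1) A_(2m+2)(0,-1), so both sequences agree by strong induction.  The power
   series are handled as polynomials truncated at a sufficiently high degree. *)

Lemma nth_pword n (s : 'S_n) i (lt_i_n : (i < n)%N) :
  nth 0%N (pword s) i = s (Ordinal lt_i_n).
Proof.
rewrite /pword (nth_map (Ordinal lt_i_n)) ?size_enum_ord //.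
by congr (val (s _)); apply: val_inj; rewrite /= nth_enum_ord.
Qed.

Lemma ltn_bump2 h i j : (bump h i < bump h j)%N = (i < j)%N.
Proof. by rewrite !ltnNge leq_bump2. Qed.

Section InsertLastLetter.
Variables (n : nat) (j : 'I_n.+2) (s : 'S_n.+1).
Let t := lift_perm ord_max j s.

Lemma lift_perm_max_Ordinal i (lt_i_n1 : (i < n.+1)%N) (lt_i_n2 : (i < n.+2)%N) :
  t (Ordinal lt_i_n2) = lift j (s (Ordinal lt_i_n1)).
Proof.
have -> : Ordinal lt_i_n2 = lift ord_max (Ordinal lt_i_n1).
  by apply: val_inj; rewrite /= /bump leqNgt lt_i_n1.
by rewrite lift_perm_lift.
Qed.

Lemma is_descent_lift_perm i : (0 < i <= n)%N -> is_descent t i = is_descent s i.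
Proof.
case/andP=> i_gt0 le_i_n.
have lt_i1_n1 : (i.-1 < n.+1)%N by lia.
have lt_i_n1 : (i < n.+1)%N by lia.
have lt_i1_n2 : (i.-1 < n.+2)%N by lia.
have lt_i_n2 : (i < n.+2)%N by lia.
rewrite /is_descent !nth_pword (lift_perm_max_Ordinal lt_i1_n1 lt_i1_n2).
by rewrite (lift_perm_max_Ordinal lt_i_n1 lt_i_n2) /= ltn_bump2.
Qed.

Lemma is_descent_lift_perm_last : is_descent t n.+1 = (j <= s ord_max)%N.
Proof.
have lt_n_n1 : (n < n.+1)%N by [].
have lt_n_n2 : (n < n.+2)%N by lia.
have lt_n1_n2 : (n.+1 < n.+2)%N by [].
rewrite /is_descent !nth_pword /= (lift_perm_max_Ordinal lt_n_n1 lt_n_n2).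
have -> : Ordinal lt_n1_n2 = ord_max by apply: val_inj.
have -> : Ordinal lt_n_n1 = ord_max by apply: val_inj.
rewrite lift_perm_id /= /bump.
by case: leqP => [le_j|lt_j] /=; lia.
Qed.

End InsertLastLetter.

Lemma bij_lift_perm_max n :
  bijective (fun p : 'I_n.+2 * 'S_n.+1 => lift_perm ord_max p.1 p.2).
Proof.
apply: inj_card_bij; last by rewrite card_prod !card_Sn card_ord factS.
move=> [j1 s1] [j2 s2] /= eq_t.
have eq_j : j1 = j2 by rewrite -(lift_perm_id ord_max j1 s1) eq_t lift_perm_id.
subst j2; congr pair; apply/permP => i; apply: (@lift_inj _ j1).
by rewrite -!(lift_perm_lift ord_max) eq_t.
Qed.

Lemma sum_binomial_ord j r : (\sum_(k < j) 'C(k, r))%N = 'C(j, r.+1).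
Proof.
elim: j => [|j IHj]; first by rewrite big_ord0 bin0n.
by rewrite big_ord_recr /= IHj binS addnC.
Qed.

Section DescentWeight.
Variables (R : comNzRingType) (w : nat -> bool -> R).

Definition descent_weight n (s : 'S_n) : R :=
  \prod_(i <- iota 1 n.-1) w i (is_descent s i).

Definition weight_sum n : R := \sum_(s : 'S_n) descent_weight s.

Definition last_letter_sum n (j : nat) : R :=
  \sum_(t : 'S_n.+1 | t ord_max == j :> nat) descent_weight t.

Definition wgap q : R := w q false - w q true.

Lemma descent_weight_lift_perm n (j : 'I_n.+2) (s : 'S_n.+1) :
  descent_weight (lift_perm ord_max j s) = descent_weight s * w n.+1 (j <= s ord_max)%N.
Proof.
rewrite /descent_weight (_ : n.+2.-1 = n + 1)%N; last by rewrite addn1.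
rewrite iotaD big_cat add1n big_seq1.
rewrite is_descent_lift_perm_last; congr (_ * _).
rewrite !big_seq; apply: eq_bigr => i; rewrite mem_iota => range_i.
by rewrite is_descent_lift_perm //; lia.
Qed.

Lemma weight_sum_last_letter n : weight_sum n.+1 = \sum_(j < n.+1) last_letter_sum n j.
Proof. exact: (partition_big (fun t : 'S_n.+1 => t ord_max)). Qed.

Lemma last_letter_sum0 : last_letter_sum 0 0 = 1.
Proof.
rewrite /last_letter_sum (eq_bigl xpredT) => [|t]; last by rewrite [t _]ord1.
rewrite (eq_bigr (fun=> 1)) => [|t _]; last by rewrite /descent_weight big_nil.
by rewrite sumr_const card_Sn.
Qed.

Lemma last_letter_sumS n j : (j <= n.+1)%N ->
  last_letter_sum n.+1 j = \sum_(k < n.+1) last_letter_sum n k * w n.+1 (j <= k)%N.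
Proof.
move=> le_j_n1; pose J : 'I_n.+2 := @Ordinal n.+2 j le_j_n1.
rewrite /last_letter_sum (reindex _ (onW_bij _ (bij_lift_perm_max n))) /=.
rewrite (eq_bigl (fun p => (p.1 == J) && xpredT p.2)) => [|p]; last first.
  by rewrite lift_perm_id andbT.
rewrite -(pair_big (pred1 J) xpredT (fun k s => descent_weight (lift_perm ord_max k s))).
rewrite /= big_pred1_eq (partition_big (fun s : 'S_n.+1 => s ord_max) xpredT) //=.
apply: eq_bigr => k _; rewrite big_distrl /=; apply: eq_bigr => s /eqP s_k.
by rewrite descent_weight_lift_perm s_k.
Qed.

Lemma last_letter_sum_split n j : (j <= n.+1)%N ->
  last_letter_sum n.+1 j =
    wgap n.+1 * \sum_(k < j) last_letter_sum n k + w n.+1 true * weight_sum n.+1.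
Proof.
move=> le_j_n1; rewrite last_letter_sumS // weight_sum_last_letter /wgap.
rewrite -(big_mkord xpredT (fun k => last_letter_sum n k * w n.+1 (j <= k)%N)).
rewrite -!(big_mkord xpredT (last_letter_sum n)).
rewrite (big_cat_nat (leq0n j) le_j_n1) [X in _ = _ + _ * X](big_cat_nat (leq0n j) le_j_n1) /=.
rewrite big_nat_cond [X in _ + X = _]big_nat_cond.
rewrite (eq_bigr (fun k => last_letter_sum n k * w n.+1 false)) => [|k /andP[/andP[_ lt_k_j] _]].
  rewrite [X in _ + X = _](eq_bigr (fun k => last_letter_sum n k * w n.+1 true)).
    by rewrite -!big_distrl /= -!big_nat_cond; ring.
  by move=> k /andP[/andP[le_j_k _] _]; rewrite le_j_k.
by rewrite leqNgt lt_k_j.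
Qed.

Lemma last_letter_sum_closed n j : (j <= n)%N ->
  last_letter_sum n j = (\prod_(1 <= q < n.+1) wgap q) * 'C(j, n)%:R +
    \sum_(1 <= p < n.+1)
      w p true * weight_sum p * (\prod_(p.+1 <= q < n.+1) wgap q) * 'C(j, n - p)%:R.
Proof.
elim: n j => [|n IHn] j le_j_n.
  by move: le_j_n; rewrite leqn0 => /eqP->; rewrite last_letter_sum0 !big_geq // mul1r addr0.
have row_k (k : 'I_j) := IHn k (leq_trans (ltn_ord k) le_j_n).
rewrite last_letter_sum_split // (eq_bigr _ (fun k _ => row_k k)).
rewrite big_split /= -mulr_sumr -natr_sum sum_binomial_ord exchange_big /=.
under [\sum_(1 <= p < n.+1) _]eq_bigr => p _ do rewrite -mulr_sumr -natr_sum sum_binomial_ord.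
rewrite [\sum_(1 <= p < n.+2) _]big_nat_recr //= subnn bin0 mulr1.
rewrite [\prod_(1 <= q < n.+2) _]big_nat_recr //= [\prod_(n.+2 <= q < n.+2) _]big_geq // mulr1.
rewrite mulrDr mulr_sumr addrA mulrA [_ * wgap _]mulrC; congr (_ + _ + _).
rewrite !big_nat; apply: eq_bigr => p /andP[_ lt_p_n1].
by rewrite (big_nat_recr _ _ _ lt_p_n1) subSn //=; ring.
Qed.

Lemma weight_sumS n : weight_sum n.+1 = \prod_(1 <= q < n.+1) wgap q +
  \sum_(1 <= p < n.+1) w p true * weight_sum p * (\prod_(p.+1 <= q < n.+1) wgap q) * 'C(n.+1, p)%:R.
Proof.
rewrite weight_sum_last_letter.
rewrite (eq_bigr _ (fun (j : 'I_n.+1) _ => @last_letter_sum_closed n j (ltn_ord j))).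
rewrite big_split /= -mulr_sumr -natr_sum sum_binomial_ord binn mulr1 exchange_big /=.
congr (_ + _); rewrite !big_nat; apply: eq_bigr => p /andP[lt0p lt_p_n1].
rewrite -mulr_sumr -natr_sum sum_binomial_ord -bin_sub; last by lia.
by rewrite (_ : n.+1 - (n - p).+1 = p)%N //; lia.
Qed.

End DescentWeight.

Lemma big_nat_double (T : Type) (idx : T) (op : Monoid.law idx) (F : nat -> T) a b d :
  b = (a + d.*2)%N ->
  \big[op/idx]_(a <= q < b) F q = \big[op/idx]_(i < d) op (F (a + i.*2)%N) (F (a + i.*2).+1).
Proof.
move->; elim: d => [|d IHd]; first by rewrite addn0 big_geq // big_ord0.
rewrite doubleS !addnS big_nat_recr ?leqW ?leq_addr // big_nat_recr ?leq_addr //.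
by rewrite IHd big_ord_recr /= Monoid.mulmA.
Qed.

Lemma prod_nat_alternate (R : comNzRingType) (u v : R) a b d : b = (a + d.*2)%N ->
  \prod_(a <= q < b) (if odd q then u else v) = (u * v) ^+ d.
Proof.
move=> def_b; rewrite (big_nat_double _ _ def_b) (eq_bigr (fun=> u * v)) ?prodr_const ?card_ord //.
by move=> i _; rewrite /= oddD odd_double addbF; case: (odd a); rewrite // mulrC.
Qed.

Definition parity_descent_weight (R : comNzRingType) (p q : R) i (d : bool) : R :=
  if d then (if odd i then p else q) else 1.

Definition alternating_weight (R : comNzRingType) i (d : bool) : R := (d == odd i)%:R.

Lemma Apq_weight_sum (R : comNzRingType) n (p q : R) :
  Apq n p q = weight_sum (parity_descent_weight p q) n.
Proof.
apply: eq_bigr => s _; rewrite /odes /edes /descent_weight.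
elim: (iota 1 n.-1) => [|i l IHl]; first by rewrite big_nil mulr1.
rewrite big_cons /= -IHl !exprD /parity_descent_weight.
by case: (odd i); case: (is_descent s i); rewrite /= ?expr0 ?expr1; ring.
Qed.

Lemma Euler_weight_sum (R : comNzRingType) n :
  (Euler n)%:R = weight_sum (alternating_weight R) n.
Proof.
rewrite /Euler /weight_sum cardsE -sum1_card natr_sum big_mkcond /=.
apply: eq_bigr => s _; rewrite unfold_in /alternating /descent_weight.
elim: (iota 1 n.-1) => [|i l IHl]; first by rewrite big_nil.
rewrite big_cons /= -IHl /alternating_weight.
by case: (odd i); case: (is_descent s i); case: (all _ _); rewrite /= ?mul1r ?mul0r.
Qed.

Lemma sign_sub_pred (R : pzRingType) m i : (i < m)%N ->
  (-1) ^+ m * (-1) ^+ (m - i.+1) = - (-1) ^+ i :> R.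
Proof.
move=> lt_i_m; rewrite -exprD (_ : m + (m - i.+1) = i.+1 + (m - i.+1).*2)%N; last by lia.
by rewrite exprD -[(-1) ^+ _.*2]signr_odd odd_double mulr1 exprS mulN1r.
Qed.

Lemma wgap_alternating (R : comNzRingType) q :
  wgap (alternating_weight R) q = if odd q then -1 else 1.
Proof. by rewrite /wgap /alternating_weight; case: (odd q); rewrite /= ?sub0r ?subr0. Qed.

(* The Taylor coefficients of tanh: tanh t = sum_i (-1)^i E_(2i+1) t^(2i+1) / (2i+1)!. *)
Definition signed_Euler_odd (R : comNzRingType) i : R := (-1) ^+ i * (Euler i.*2.+1)%:R.

Lemma prod_wgap_alternating (R : comNzRingType) a b d : b = (a + d.*2)%N ->
  \prod_(a <= q < b) wgap (alternating_weight R) q = (-1) ^+ d.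
Proof.
move=> def_b; rewrite (eq_bigr _ (fun q _ => wgap_alternating R q)).
by rewrite (prod_nat_alternate _ _ def_b) mulr1.
Qed.

Lemma Euler_binomial_sum (R : comNzRingType) m :
  \sum_(i < m.+1) 'C(m.*2.+1, i.*2.+1)%:R * signed_Euler_odd R i = 1.
Proof.
have desc_w p : alternating_weight R p true = (odd p)%:R.
  by rewrite /alternating_weight; case: (odd p).
have E_rec := weight_sumS (alternating_weight R) m.*2.
rewrite (@prod_wgap_alternating _ _ _ m) // in E_rec.
rewrite (big_nat_double _ _ (_ : m.*2.+1 = 1 + m.*2)%N) // in E_rec.
rewrite big_ord_recr /= binn mul1r /signed_Euler_odd Euler_weight_sum E_rec mulrDr.
rewrite -exprD addnn -signr_odd odd_double mulr_sumr addrCA -big_split big1 ?addr0 //.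
move=> i _; have lt_i_m := ltn_ord i.
rewrite /signed_Euler_odd !add1n !desc_w /= odd_double /= !mul0r addr0 mul1r.
rewrite big_nat_recr /=; last by lia.
rewrite (@prod_wgap_alternating _ _ _ (m - i.+1)%N); last by lia.
rewrite wgap_alternating odd_double mulr1 Euler_weight_sum.
rewrite (mulrC (weight_sum _ _)) [(-1) ^+ m * _]mulrA [(-1) ^+ m * _]mulrA.
by rewrite sign_sub_pred //; ring.
Qed.

Lemma wgap_parity_descent (R : comNzRingType) q :
  wgap (parity_descent_weight (0 : R) (-1)) q = if odd q then 1 else 2.
Proof. by rewrite /wgap /parity_descent_weight; case: (odd q) => /=; ring. Qed.

Lemma prod_wgap_parity_descent (R : comNzRingType) a b d : b = (a + d.*2)%N ->
  \prod_(a <= q < b) wgap (parity_descent_weight (0 : R) (-1)) q = 2 ^+ d.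
Proof.
move=> def_b; rewrite (eq_bigr _ (fun q _ => wgap_parity_descent R q)).
by rewrite (prod_nat_alternate _ _ def_b) mul1r.
Qed.

Section ApqRecurrences.
Variable R : comNzRingType.

Lemma Apq_odd_rec m :
  Apq m.*2.+1 (0 : R) (-1) =
  2 ^+ m - \sum_(i < m) Apq i.*2.+2 (0 : R) (-1) * 2 ^+ (m - i.+1) * 'C(m.*2.+1, i.*2.+2)%:R.
Proof.
rewrite [LHS]Apq_weight_sum weight_sumS (@prod_wgap_parity_descent _ _ _ m) //.
rewrite (big_nat_double _ _ (_ : m.*2.+1 = 1 + m.*2)%N) // -sumrN; congr (_ + _).
apply: eq_bigr => i _; have lt_i_m := ltn_ord i.
rewrite !add1n /= odd_double /= !mul0r add0r.
rewrite (@prod_wgap_parity_descent _ _ _ (m - i.+1)%N); last by lia.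
by rewrite Apq_weight_sum mulN1r !mulNr.
Qed.

Lemma Apq_even_rec m :
  Apq m.*2.+2 (0 : R) (-1) =
  2 ^+ m - \sum_(i < m) Apq i.*2.+2 (0 : R) (-1) * 2 ^+ (m - i.+1) * 'C(m.*2.+2, i.*2.+2)%:R.
Proof.
rewrite [LHS]Apq_weight_sum weight_sumS [\prod_(1 <= q < m.*2.+2) _]big_nat_recr //=.
rewrite (@prod_wgap_parity_descent _ _ _ m) // wgap_parity_descent /= odd_double mulr1.
rewrite [\sum_(1 <= p < m.*2.+2) _]big_nat_recr //= odd_double /= !mul0r addr0.
rewrite (big_nat_double _ _ (_ : m.*2.+1 = 1 + m.*2)%N) // -sumrN; congr (_ + _).
apply: eq_bigr => i _; have lt_i_m := ltn_ord i.
rewrite !add1n /= odd_double /= !mul0r add0r big_nat_recr /=; last by lia.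
rewrite (@prod_wgap_parity_descent _ _ _ (m - i.+1)%N); last by lia.
by rewrite wgap_parity_descent /= odd_double mulr1 Apq_weight_sum mulN1r !mulNr.
Qed.

End ApqRecurrences.

Section TruncatedEGF.
Variable R : numFieldType.
Implicit Types (p q : {poly R}) (L : nat).

Definition egf p n : R := p`_n * n`!%:R.

Definition egf_poly N (a : nat -> R) : {poly R} := \poly_(i < N) (a i / i`!%:R).

Definition vanishes_upto L p := forall n, (n <= L)%N -> p`_n = 0.

Lemma egfM p q n :
  egf (p * q) n = \sum_(k < n.+1) 'C(n, k)%:R * (egf p k * egf q (n - k)).
Proof.
rewrite /egf coefM mulr_suml; apply: eq_bigr => k _.
by rewrite -(bin_fact (ltn_ord k : (k <= n)%N)) !natrM; ring.
Qed.

Lemma egf_deriv p n : egf p^`() n = egf p n.+1.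
Proof. by rewrite /egf coef_deriv factS natrM mulrA -[p`_n.+1 *+ n.+1]mulr_natr. Qed.

Lemma egfD p q n : egf (p + q) n = egf p n + egf q n.
Proof. by rewrite /egf coefD mulrDl. Qed.

Lemma egfB p q n : egf (p - q) n = egf p n - egf q n.
Proof. by rewrite /egf coefB mulrBl. Qed.

Lemma egfMn p k n : egf (p *+ k) n = egf p n *+ k.
Proof. by rewrite /egf coefMn mulrnAl. Qed.

Lemma egf1 n : egf 1 n = (n == 0)%:R.
Proof. by rewrite /egf coef1; case: n => [|n]; rewrite /= ?mul1r ?mul0r. Qed.

Lemma egf_polyE N a n : (n < N)%N -> egf (egf_poly N a) n = a n.
Proof. by move=> lt_n_N; rewrite /egf coef_poly lt_n_N divfK // pnatr_eq0 -lt0n fact_gt0. Qed.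

Lemma vanishes_egf L p : (forall n, (n <= L)%N -> egf p n = 0) -> vanishes_upto L p.
Proof.
move=> p0 n /p0 /eqP; rewrite /egf mulf_eq0 pnatr_eq0 (negPf (lt0n_neq0 (fact_gt0 n))) orbF.
exact: eqP.
Qed.

Lemma vanishes_mulr L p q : vanishes_upto L p -> vanishes_upto L (p * q).
Proof.
move=> p0 n le_n_L; rewrite coefM big1 // => k _.
by rewrite p0 ?mul0r // (leq_trans _ le_n_L) // -ltnS.
Qed.

Lemma vanishes_mull L p q : vanishes_upto L q -> vanishes_upto L (p * q).
Proof. by rewrite mulrC; apply: vanishes_mulr. Qed.

Lemma vanishes_add L p q :
  vanishes_upto L p -> vanishes_upto L q -> vanishes_upto L (p + q).
Proof. by move=> p0 q0 n le_n_L; rewrite coefD p0 ?q0 ?addr0. Qed.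

Lemma vanishes_sub L p q :
  vanishes_upto L p -> vanishes_upto L q -> vanishes_upto L (p - q).
Proof. by move=> p0 q0 n le_n_L; rewrite coefB p0 ?q0 ?subr0. Qed.

Lemma vanishes_le L M p : (M <= L)%N -> vanishes_upto L p -> vanishes_upto M p.
Proof. by move=> le_M_L p0 n le_n_M; rewrite p0 // (leq_trans le_n_M). Qed.

Lemma vanishes_deriv L p : vanishes_upto L.+1 p -> vanishes_upto L p^`().
Proof. by move=> p0 n le_n_L; rewrite coef_deriv p0 ?mul0rn. Qed.

Lemma vanishes_antideriv L p :
  p`_0 = 0 -> vanishes_upto L p^`() -> vanishes_upto L.+1 p.
Proof.
move=> p0 dp0 [|n] // le_n_L; apply/eqP.
by have := dp0 n le_n_L; rewrite coef_deriv => /eqP; rewrite mulrn_eq0.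
Qed.

Lemma vanishes_egf_eq L p q :
  vanishes_upto L (p - q) -> forall n, (n <= L)%N -> egf p n = egf q n.
Proof.
move=> pq0 n le_n_L; apply/eqP.
by rewrite /egf -subr_eq0 -mulrBl -coefB pq0 ?mul0r.
Qed.

End TruncatedEGF.

Lemma sum_ord_double (R : nmodType) (F : nat -> R) d :
  \sum_(k < d.*2) F k = \sum_(i < d) (F i.*2 + F i.*2.+1).
Proof. by rewrite -(big_mkord xpredT) (big_nat_double _ _ (_ : d.*2 = 0 + d.*2)%N). Qed.

Section TanhRecurrences.
Variables (R : numFieldType) (x : nat -> R).
Hypothesis x_binomial_sum : forall m, \sum_(i < m.+1) 'C(m.*2.+1, i.*2.+1)%:R * x i = 1.

Lemma x0_eq1 : x 0 = 1.
Proof. by have := x_binomial_sum 0; rewrite big_ord1 mul1r. Qed.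

Definition even_ind n : R := (~~ odd n)%:R.
Definition odd_ind n : R := (odd n)%:R.
Definition odd_spread (a : nat -> R) n : R := if odd n then a n./2 else 0.

Lemma odd_spread_odd a k : odd_spread a k.*2.+1 = a k.
Proof. by rewrite /odd_spread /= odd_double uphalf_double. Qed.

Lemma odd_spread_even a k : odd_spread a k.*2 = 0.
Proof. by rewrite /odd_spread odd_double. Qed.

(* Truncations of cosh, sinh and of the series X with odd exponential coefficients x;
   the hypothesis says X cosh = sinh.  Keeping terms up to degree L+2 makes c' = s and
   s' = c exact up to degree L+1. *)
Variable L : nat.
Let c := egf_poly L.+3 even_ind.
Let s := egf_poly L.+3 odd_ind.
Let X := egf_poly L.+3 (odd_spread x).

Lemma cosh_deriv : vanishes_upto L.+1 (c^`() - s).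
Proof.
apply: vanishes_egf => n le_n_L; rewrite egfB egf_deriv !egf_polyE; try lia.
by rewrite /even_ind /odd_ind /= negbK subrr.
Qed.

Lemma sinh_deriv : vanishes_upto L.+1 (s^`() - c).
Proof.
apply: vanishes_egf => n le_n_L; rewrite egfB egf_deriv !egf_polyE; try lia.
by rewrite /even_ind /odd_ind /= subrr.
Qed.

Lemma tanh_cosh : vanishes_upto L.+1 (X * c - s).
Proof.
apply: vanishes_egf => n le_n_L; apply/eqP; rewrite egfB egfM subr_eq0 egf_polyE; last by lia.
pose F k := 'C(n, k)%:R * (odd_spread x k * even_ind (n - k)).
rewrite (eq_bigr (fun k : 'I_n.+1 => F k)); last first.
  by move=> k _; rewrite !egf_polyE //; have := ltn_ord k; lia.
rewrite /odd_ind; case: (boolP (odd n)) => [odd_n | even_n].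
  have [m def_n] : exists m, n = m.*2.+1.
    by exists n./2; rewrite -[n in LHS]odd_double_half odd_n.
  apply/eqP; transitivity (1 : R) => //.
  rewrite -[RHS](x_binomial_sum m) (_ : n.+1 = m.+1.*2) ?sum_ord_double; last by rewrite def_n.
  apply: eq_bigr => i _; rewrite /F def_n.
  rewrite /odd_spread /= !odd_double /= uphalf_double mul0r mulr0 add0r.
  by rewrite /even_ind subSS -doubleB odd_double mulr1.
apply/eqP; rewrite big1 // => k _; rewrite /F /odd_spread /even_ind.
case: (boolP (odd k)) => [odd_k|]; last by rewrite !mul0r mulr0.
by rewrite oddB ?odd_k ?(negPf even_n) ?mulr0 // -ltnS.
Qed.

Lemma cosh_sqr_sub_sinh_sqr : vanishes_upto L.+2 (c * c - s * s - 1).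
Proof.
apply: vanishes_antideriv.
  rewrite !coefB !coefM !big_ord1 coef1 /= /c /s !coef_poly /= /even_ind /odd_ind /=.
  by rewrite !divr1 mul1r mul0r !subr0 subrr.
have -> : (c * c - s * s - 1)^`() = 2%:R * c * (c^`() - s) - 2%:R * s * (s^`() - c).
  by rewrite !derivB !derivM -polyC1 derivC; ring.
by apply: vanishes_sub; apply: vanishes_mull; [exact: cosh_deriv | exact: sinh_deriv].
Qed.

Lemma tanh_deriv_cosh : vanishes_upto L (X^`() * c + X * s - c).
Proof.
have -> : X^`() * c + X * s - c = (X * c - s)^`() - X * (c^`() - s) + (s^`() - c).
  by rewrite derivB derivM; ring.
apply: vanishes_add; last exact: vanishes_le (leqnSn L) sinh_deriv.
apply: vanishes_sub; first exact: vanishes_deriv tanh_cosh.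
exact: vanishes_mull (vanishes_le (leqnSn L) cosh_deriv).
Qed.

Lemma tanh_eq_deriv_sinh_cosh : vanishes_upto L (X^`() * (s * c) - X).
Proof.
have -> : X^`() * (s * c) - X =
    s * (X^`() * c + X * s - c) - c * (X * c - s) + X * (c * c - s * s - 1).
  by ring.
have K0 := vanishes_le (leqW (leqnSn L)) cosh_sqr_sub_sinh_sqr.
apply: vanishes_add; last exact: vanishes_mull K0.
apply: vanishes_sub; first exact: vanishes_mull tanh_deriv_cosh.
exact: vanishes_mull (vanishes_le (leqnSn L) tanh_cosh).
Qed.

Lemma tanh_deriv_cosh_sqr : vanishes_upto L (X^`() * (s * s) + X^`() - 1).
Proof.
have -> : X^`() * (s * s) + X^`() - 1 = c * (X^`() * c + X * s - c) - s * (X * c - s) +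
    (c * c - s * s - 1) - X^`() * (c * c - s * s - 1).
  by ring.
have K0 := vanishes_le (leqW (leqnSn L)) cosh_sqr_sub_sinh_sqr.
apply: vanishes_sub; last exact: vanishes_mull K0.
apply: vanishes_add; last exact: K0.
apply: vanishes_sub; first exact: vanishes_mull tanh_deriv_cosh.
exact: vanishes_mull (vanishes_le (leqnSn L) tanh_cosh).
Qed.

Lemma egf_sinh_cosh n : (n <= L.+2)%N ->
  egf (s * c) n = (if odd n then 4 ^+ n./2 else 0) /\
  egf (c * c + s * s) n = (if odd n then 0 else 4 ^+ n./2).
Proof.
elim: n => [|n IHn] le_n_L.
  rewrite egfD !egfM !big_ord1 /= !egf_polyE // /even_ind /odd_ind /= bin0.
  by split; ring.
have le_n_L1 : (n <= L.+1)%N by [].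
have [sc_n ccss_n] := IHn (ltnW le_n_L).
have sc_deriv : vanishes_upto L.+1 ((s * c)^`() - (c * c + s * s)).
  have -> : (s * c)^`() - (c * c + s * s) = (s^`() - c) * c + s * (c^`() - s).
    by rewrite derivM; ring.
  by apply: vanishes_add; [apply: vanishes_mulr; exact: sinh_deriv |
                           apply: vanishes_mull; exact: cosh_deriv].
have ccss_deriv : vanishes_upto L.+1 ((c * c + s * s)^`() - (s * c) *+ 4).
  have -> : (c * c + s * s)^`() - (s * c) *+ 4 =
      2%:R * c * (c^`() - s) + 2%:R * s * (s^`() - c).
    by rewrite derivD !derivM; ring.
  by apply: vanishes_add; apply: vanishes_mull; [exact: cosh_deriv | exact: sinh_deriv].
rewrite -!egf_deriv (vanishes_egf_eq sc_deriv le_n_L1).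
rewrite (vanishes_egf_eq ccss_deriv le_n_L1) egfMn sc_n ccss_n /= uphalf_half.
by case: (odd n); rewrite /= ?add0n ?add1n ?exprS ?mul0rn //; split; ring.
Qed.

Lemma egf_sinh_sqr k : (k.*2.+1 <= L.+1)%N -> egf (s * s) k.+1.*2 = 2 * 4 ^+ k.
Proof.
move=> le_k_L; have ss_deriv : vanishes_upto L.+1 ((s * s)^`() - (s * c) *+ 2).
  have -> : (s * s)^`() - (s * c) *+ 2 = 2%:R * s * (s^`() - c) by rewrite derivM; ring.
  by apply: vanishes_mull; exact: sinh_deriv.
rewrite doubleS -egf_deriv (vanishes_egf_eq ss_deriv le_k_L) egfMn.
have [-> _] := egf_sinh_cosh (leqW le_k_L).
by rewrite /= odd_double /= uphalf_double mulr2n; ring.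
Qed.

Lemma tanh_odd_rec_upto m : (m.*2.+1 <= L)%N ->
  x m = \sum_(j < m.+1) 'C(m.*2.+1, j.*2)%:R * x j * 4 ^+ (m - j).
Proof.
move=> le_m_L; have := vanishes_egf_eq tanh_eq_deriv_sinh_cosh le_m_L.
rewrite egf_polyE ?odd_spread_odd; last by lia.
move <-; rewrite egfM -doubleS.
pose F k := 'C(m.*2.+1, k)%:R * (odd_spread x k.+1 * egf (s * c) (m.*2.+1 - k)).
rewrite (eq_bigr (fun k : 'I_ _ => F k)); last first.
  by move=> k _; rewrite egf_deriv egf_polyE //; have := ltn_ord k; lia.
rewrite sum_ord_double; apply: eq_bigr => j _; rewrite /F.
have le_j_m : (j <= m)%N by rewrite -ltnS.
rewrite odd_spread_odd -doubleS odd_spread_even mul0r mulr0 addr0 subSn ?leq_double // -doubleB.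
have le_mj_L : ((m - j).*2.+1 <= L.+2)%N by lia.
have [-> _] := egf_sinh_cosh le_mj_L.
by rewrite /= odd_double /= uphalf_double; ring.
Qed.

Lemma tanh_even_rec_upto m : (m.*2.+2 <= L)%N ->
  x m.+1 = - \sum_(j < m.+1) 'C(m.*2.+2, j.*2)%:R * x j * (2 * 4 ^+ (m - j)).
Proof.
move=> le_m_L; have := vanishes_egf_eq tanh_deriv_cosh_sqr le_m_L.
rewrite egfD egf1 egf_deriv egf_polyE; last by lia.
rewrite -[m.*2.+3]/(m.+1.*2.+1) odd_spread_odd => /eqP; rewrite addrC addr_eq0 => /eqP->.
rewrite egfM big_ord_recr /= subnn -doubleS.
rewrite [egf (s * s) 0]egfM big_ord1 egf_polyE // /odd_ind /= !mul0r !mulr0 addr0.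
pose F k := 'C(m.+1.*2, k)%:R * (odd_spread x k.+1 * egf (s * s) (m.+1.*2 - k)).
rewrite (eq_bigr (fun k : 'I_ _ => F k)); last first.
  by move=> k _; rewrite egf_deriv egf_polyE //; have := ltn_ord k; lia.
rewrite sum_ord_double; congr (- _); apply: eq_bigr => j _; rewrite /F.
have le_j_m : (j <= m)%N by rewrite -ltnS.
rewrite odd_spread_odd -doubleS odd_spread_even mul0r mulr0 addr0 -doubleB subSn //.
by rewrite egf_sinh_sqr; [ring | lia].
Qed.

End TanhRecurrences.

Lemma tanh_odd_rec (R : numFieldType) (x : nat -> R) :
    (forall m, \sum_(i < m.+1) 'C(m.*2.+1, i.*2.+1)%:R * x i = 1) ->
  forall m, x m = \sum_(j < m.+1) 'C(m.*2.+1, j.*2)%:R * x j * 4 ^+ (m - j).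
Proof. by move=> x_binomial_sum m; apply: tanh_odd_rec_upto (leqnn _). Qed.

Lemma tanh_even_rec (R : numFieldType) (x : nat -> R) :
    (forall m, \sum_(i < m.+1) 'C(m.*2.+1, i.*2.+1)%:R * x i = 1) ->
  forall m, x m.+1 = - \sum_(j < m.+1) 'C(m.*2.+2, j.*2)%:R * x j * (2 * 4 ^+ (m - j)).
Proof. by move=> x_binomial_sum m; apply: tanh_even_rec_upto (leqnn _). Qed.

Lemma expr2_sqr (R : comNzRingType) m : 2 ^+ m * 2 ^+ m = 4 ^+ m :> R.
Proof. by rewrite -exprMn -natrM. Qed.

Lemma expr2_sub_pred (R : comNzRingType) m i : (i < m)%N ->
  2 ^+ m * 2 ^+ (m - i.+1) = 2 ^+ i.+1 * 4 ^+ (m - i.+1) :> R.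
Proof.
move=> lt_i_m; rewrite (_ : 4 = 2 ^+ 2); last by rewrite expr2 -natrM.
by rewrite -exprM -!exprD; congr (_ ^+ _); lia.
Qed.

Section ApqEuler.
Variable R : numFieldType.
Local Notation A n := (Apq n (0 : R) (-1)).
Local Notation t := (signed_Euler_odd R).

Let t_odd_rec := tanh_odd_rec (Euler_binomial_sum R).
Let t_even_rec := tanh_even_rec (Euler_binomial_sum R).
Let t0 := x0_eq1 (Euler_binomial_sum R).

Lemma Apq_even_Euler m : 2 ^+ m.+1 * A m.*2.+2 = - t m.+1.
Proof.
elim/ltn_ind: m => m IHm.
rewrite Apq_even_rec t_even_rec opprK big_ord_recl /= t0 bin0 subn0 mulrBr mulr_sumr -sumrN.
congr (_ + _); first by rewrite -expr2_sqr exprS; ring.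
apply: eq_bigr => i _; have lt_i_m := ltn_ord i.
rewrite /bump /= add1n doubleS -[t i.+1]opprK -IHm //.
transitivity (- (2 ^+ m * 2 ^+ (m - i.+1)) * 2 * A i.*2.+2 * 'C(m.*2.+2, i.*2.+2)%:R).
  by rewrite exprS; ring.
by rewrite expr2_sub_pred //; ring.
Qed.

Lemma Apq_odd_Euler m : 2 ^+ m * A m.*2.+1 = t m.
Proof.
rewrite Apq_odd_rec t_odd_rec big_ord_recl /= t0 bin0 subn0 mulrBr mulr_sumr -sumrN.
congr (_ + _); first by rewrite -expr2_sqr; ring.
apply: eq_bigr => i _; have lt_i_m := ltn_ord i.
rewrite /bump /= add1n doubleS -[t i.+1]opprK -Apq_even_Euler.
transitivity (- (2 ^+ m * 2 ^+ (m - i.+1)) * A i.*2.+2 * 'C(m.*2.+1, i.*2.+2)%:R).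
  by ring.
by rewrite expr2_sub_pred //; ring.
Qed.

End ApqEuler.

Theorem lemma3p4 (m : nat) :
  Apq (2 * m + 1)%N (0 : rat) (-1) = (-1) ^+ m * (Euler (2 * m + 1))%:R / 2 ^+ m /\
  Apq (2 * m + 2)%N (0 : rat) (-1) = (-1) ^+ m * (Euler (2 * m + 3))%:R / 2 ^+ m.+1.
Proof.
have two_pow_neq0 k : (2 : rat) ^+ k != 0 by rewrite expf_neq0.
rewrite mul2n addn1 addn2 addn3; split.
  apply: (mulfI (two_pow_neq0 m)).
  by rewrite Apq_odd_Euler /signed_Euler_odd [RHS]mulrC divfK.
apply: (mulfI (two_pow_neq0 m.+1)).
by rewrite Apq_even_Euler /signed_Euler_odd exprS mulN1r mulNr opprK [RHS]mulrC divfK.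
Qed.
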